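(* Consider any sub-auction (upper level or lower level) of the hierarchical auction, run either with Rule A (exact winner determination with price $\max\{q^{\mathrm{base}},q^{\mathrm{vcg}}\}$) or with Rule B (greedy winner determination with price $\max\{q^{\mathrm{base}},q^{\mathrm{greedy}}\}$), as defined in the context. Then the mechanism is individually rational for truthful bidders: every bidder $k$ that bids truthfully ($b_k(S)=v_k(S)$ for all $S\in\mathcal{B}_k$) obtains utility $u_k\ge 0$; that is, if $k$ wins bundle $S_k$ and is charged $q_k$, then $v_k(S_k)-q_k\ge 0$ (a losing bidder pays nothing and has utility $0$).
   Context: Sub-auction model. There are $R$ resource types and an integer capacity vector $Q\in\mathbb{Z}_{\ge0}^R$ held by a single seller (who is also the auctioneer). In the hierarchical auction, the upper-level sub-auction has the infrastructure provider as seller with $R=3$ (subchannels, discretized power units, antennas) and capacities equal to the leftover (non-reserved) resources, the bidders being the virtual network operators; each lower-level sub-auction has one virtual network operator as seller with $R=2$ and capacities $(\hat C_m J,\hat P_m)$ (available subchannels times maximal number $J$ of users per subchannel, and available power units), the bidders being its users. Both levels are instances of the following model. Each bidder $i$ in a finite set $N$ submits an XOR bid: a finite set $\mathcal{B}_i\subset\mathbb{Z}_{\ge0}^R\setminus\{0\}$ of bundles and a bid value $b_i(S)\ge 0$ for each $S\in\mathcal{B}_i$ (a single-minded bidder has $|\mathcal{B}_i|=1$). A feasible allocation is $x=(x_i(S))$ with $x_i(S)\in\{0,1\}$, $\sum_{S\in\mathcal{B}_i}x_i(S)\le1$ for each $i$, and $\sum_i\sum_{S}x_i(S)\,S\le Q$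 componentwise; bidder $i$ wins $S$ if $x_i(S)=1$. Bidder $i$ has a private valuation $v_i:\mathcal{B}_i\to\mathbb{R}_{\ge0}$; its utility is $u_i=v_i(S_i)-q_i$ if it wins $S_i$ and is charged $q_i$, and $u_i=0$ if it wins nothing (losers are not charged). Base price: there is a vector $\beta\in\mathbb{R}_{\ge0}^R$ of per-unit base access prices, known to all, and $q^{\mathrm{base}}(S)=\beta\cdot S$. Standing assumption: a bidder places a bid on a bundle $S$ only if $v_i(S)\ge q^{\mathrm{base}}(S)$. Rule A: the allocation $x^*$ maximizes $\sum_i\sum_S b_i(S)x_i(S)$ over feasible allocations; with $W$ its optimal value and $W_{-k}$ the optimal value of the same problem with bidder $k$ removed, a winner $k$ of bundle $S_k$ is charged $q_k=\max\{q^{\mathrm{base}}(S_k),q_k^{\mathrm{vcg}}\}$ where $q_k^{\mathrm{vcg}}=W_{-k}-(W-b_k(S_k))$. Rule B: fix weights $\omega\in\mathbb{R}_{>0}^R$ and let $|S|=\omega\cdot S$. List all pairs $(i,S)$ with $S\in\mathcal{B}_i$ in nonincreasing order of $b_i(S)/\sqrt{|S|}$ (ties broken by a fixed rule); scanning the list, accept pair $(i,S)$ (bidder $i$ wins $S$) iff $i$ has not yet won a bundle and $S$ fits in the remaining capacity, and then subtract $S$ from the remaining capacity. For a winner $k$ of $S_k$, let $\mathbb{B}_k$ be the set of pairs $(j,T)$, $j\neq k$, such that $j$ wins nothing in this run but the same greedy procedure run on the bids of all bidders except $k$ accepts $(j,T)$ (bidder $k$ ''uniquely blocks'' $j$). Then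 $q_k^{\mathrm{greedy}}=\max_{(j,T)\in\mathbb{B}_k}\frac{b_j(T)}{\sqrt{|T|}}\sqrt{|S_k|}$ (taken as $0$ if $\mathbb{B}_k=\emptyset$) and $k$ is charged $q_k=\max\{q^{\mathrm{base}}(S_k),q_k^{\mathrm{greedy}}\}$. *)

From HB Require Import structures.
From mathcomp Require Import all_boot all_order all_algebra.
From mathcomp Require Import reals.
Set Implicit Arguments. Unset Strict Implicit. Unset Printing Implicit Defensive.
Import Order.TTheory GRing.Theory Num.Theory.
Local Open Scope ring_scope.

Section SubAuction.
Variable F : realType.
Variable r : nat.               (* number of resource types R *)
Variable N : finType.

Definition bundle := {ffun 'I_r -> nat}.
Definition bzero : bundle := [ffun=> 0%N].

Definition wdot (w : 'I_r -> F) (S : bundle) : F := \sum_(t < r) w t * (S t)%:R.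
Definition qbase (beta : 'I_r -> F) (S : bundle) : F := wdot beta S.

(* Allocations: bidder i wins Some S (x_i(S) = 1) or nothing (None);
   this is exactly a 0/1 vector x with sum_S x_i(S) <= 1 for each i. *)
Definition alloc := N -> option bundle.
Definition used (o : option bundle) (t : 'I_r) : nat :=
  if o is Some X then X t else 0%N.
Definition feasible (B : N -> seq bundle) (Q : bundle) (a : alloc) : Prop :=
  (forall i S, a i = Some S -> S \in B i) /\
  (forall t : 'I_r, (\sum_(i : N) used (a i) t <= Q t)%N).
Definition oval (b : N -> bundle -> F) (i : N) (o : option bundle) : F :=
  if o is Some X then b i X else 0.
Definition welfare (b : N -> bundle -> F) (a : alloc) : F :=
  \sum_(i : N) oval b i (a i).

Definition optimal_alloc B Q b (a : alloc) : Prop :=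
  feasible B Q a /\ forall a', feasible B Q a' -> welfare b a' <= welfare b a.
Definition optval b (P : alloc -> Prop) (w : F) : Prop :=
  (exists a, P a /\ welfare b a = w) /\ (forall a, P a -> welfare b a <= w).

Definition utility (v : N -> bundle -> F) (k : N) (o : option bundle)
  (price : bundle -> F) : F :=
  if o is Some X then v k X - price X else 0.

(* Wk = W_{-k}, the optimal value with bidder k removed *)
Definition priceA (beta : 'I_r -> F) b (astar : alloc) (k : N) (Wk : F)
  (S : bundle) : F :=
  Num.max (qbase beta S) (Wk - (welfare b astar - b k S)).

Definition fits (S cap : bundle) : bool := [forall t, (S t <= cap t)%N].
Definition bsub (cap S : bundle) : bundle := [ffun t => (cap t - S t)%N].

Fixpoint greedy_aux (cap : bundle) (won : seq N) (L : seq (N * bundle))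
  : seq (N * bundle) :=
  match L with
  | [::] => [::]
  | (i, X) :: L' =>
      if (i \notin won) && fits X cap
      then (i, X) :: greedy_aux (bsub cap X) (i :: won) L'
      else greedy_aux cap won L'
  end.
Definition greedy (Q : bundle) (L : seq (N * bundle)) := greedy_aux Q [::] L.

Definition winners (G : seq (N * bundle)) : seq N := map fst G.
Definition won_bundle (G : seq (N * bundle)) (k : N) : option bundle :=
  ohead [seq p.2 | p <- G & p.1 == k].

(* |S| = omega . S and the greedy score b_i(S)/sqrt|S| *)
Definition score (omega : 'I_r -> F) (b : N -> bundle -> F) (p : N * bundle) : F :=
  b p.1 p.2 / Num.sqrt (wdot omega p.2).

(* run on all bids except those of k: same ordered list with k's pairs removed
   (same fixed tie-breaking rule) *)
Definition Lminus (L : seq (N * bundle)) (k : N) := [seq p <- L | p.1 != k].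

Definition blocked (Q : bundle) (L : seq (N * bundle)) (k : N) :=
  [seq p <- greedy Q (Lminus L k) |
     (p.1 != k) && (p.1 \notin winners (greedy Q L))].

Definition qgreedy omega b Q L (k : N) (S : bundle) : F :=
  \big[Num.max/0]_(p <- blocked Q L k) (score omega b p * Num.sqrt (wdot omega S)).

Definition priceB beta omega b Q L (k : N) (S : bundle) : F :=
  Num.max (qbase beta S) (qgreedy omega b Q L k S).

Definition greedy_order omega b (B : N -> seq bundle) (L : seq (N * bundle)) : Prop :=
  uniq L /\ (forall p, (p \in L) = (p.2 \in B p.1)) /\
  sorted (fun p q => score omega b q <= score omega b p) L.

End SubAuction.

From HB Require Import structures.
From mathcomp Require Import all_boot all_order all_algebra.
From mathcomp Require Import reals.
Import Order.TTheory GRing.Theory Num.Theory.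
Local Open Scope ring_scope.

(** Both prices are the maximum of the base price and a second term, and the
standing assumption bounds the base price by the valuation, so it suffices to
bound the second term by the (truthful) bid.  For Rule A, W_{-k} is the value
of an allocation feasible for the full problem, so W_{-k} <= W and the VCG
term is at most b_k(S_k).  For Rule B, every pair uniquely blocked by k comes
after (k, S_k) in the score order, so its score times sqrt|S_k| is at most
b_k(S_k). *)

Section Utility.
Context {F : realType} {r : nat} {N : finType}.

Lemma utility_ge0 (v : N -> bundle r -> F) k (o : option (bundle r)) price :
  (forall S, o = Some S -> price S <= v k S) -> 0 <= utility v k o price.
Proof. by case: o => [S /(_ S erefl)|] //=; rewrite subr_ge0. Qed.

End Utility.

Section RuleA.
Context {F : realType} {r : nat} {N : finType}.
Variables (B : N -> seq (bundle r)) (Q : bundle r) (b : N -> bundle r -> F).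

Lemma optval_le_optimal {P : alloc r N -> Prop} {astar w} :
  (forall a, P a -> feasible B Q a) -> optimal_alloc B Q b astar ->
  optval b P w -> w <= welfare b astar.
Proof. by move=> PQ [_ opt] [[a [Pa <-]] _]; exact/opt/PQ. Qed.

Lemma vcg_price_le_bid {P : alloc r N -> Prop} {astar} k {Wk} S :
  (forall a, P a -> feasible B Q a) -> optimal_alloc B Q b astar ->
  optval b P Wk -> Wk - (welfare b astar - b k S) <= b k S.
Proof.
move=> PQ opt /(optval_le_optimal PQ opt) Wk_le.
by rewrite lerBlDr addrC subrK.
Qed.

End RuleA.

Section RuleB.
Context {F : realType} {r : nat} {N : finType}.
Variables (omega : 'I_r -> F) (b : N -> bundle r -> F).

Local Notation score := (score omega b).
Local Notation score_sorted :=
  (sorted (fun p q : N * bundle r => score q <= score p)).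

Lemma mem_greedy_aux {cap : bundle r} {won : seq N} {L p} :
  p \in greedy_aux cap won L -> p \in L.
Proof.
elim: L cap won => [|[i X] L IH] cap won //=.
case: ifP => _; rewrite in_cons; last by move=> /IH ->; rewrite orbT.
by rewrite in_cons => /orP [->|/IH ->]; rewrite ?orbT.
Qed.

Lemma won_bundle_mem {G : seq (N * bundle r)} {k S} :
  won_bundle G k = Some S -> (k, S) \in G.
Proof.
rewrite /won_bundle; elim: G => [|[i X] G IH] //=.
case: eqP => [-> [->]|_ /IH kS_in]; first exact: mem_head.
by rewrite in_cons kS_in orbT.
Qed.

(* The run without k follows the run with k until (k, S) is reached; any pair
   the former accepts afterwards lies behind (k, S) in the sorted list. *)
Lemma greedy_aux_blocked_score_le {L cap won k S p} :
  score_sorted L -> k \notin won ->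
  won_bundle (greedy_aux cap won L) k = Some S ->
  p \in greedy_aux cap won (Lminus L k) ->
  p.1 \notin winners (greedy_aux cap won L) ->
  score p <= score (k, S).
Proof.
have score_trans : transitive (fun p q : N * bundle r => score q <= score p).
  by move=> y x z /= xy yz; exact: le_trans yz xy.
elim: L cap won => [|[i X] L IH] cap won //=.
have [->|ik] := eqVneq i k => sortedL k_notin; have sortedL' := path_sorted sortedL.
  rewrite /Lminus /=; case: ifP => [_|_]; last exact: IH.
  rewrite /won_bundle /= eqxx => -[<-] /mem_greedy_aux.
  rewrite mem_filter => /andP [_ pL] _.
  by have /allP/(_ _ pL) := order_path_min score_trans sortedL.
rewrite /Lminus /=.
case: ifP => _; last exact: IH.
rewrite /won_bundle /= (negbTE ik) /= => kS_won.
rewrite in_cons => /orP [/eqP -> | p_acc]; first by rewrite /winners mem_head.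
rewrite /winners /= in_cons negb_or => /andP [_ p_lost].
apply: (IH _ _ sortedL' _ kS_won p_acc p_lost).
by rewrite in_cons negb_or eq_sym ik.
Qed.

Lemma blocked_score_le {Q : bundle r} {L k S p} :
  score_sorted L -> won_bundle (greedy Q L) k = Some S ->
  p \in blocked Q L k -> score p <= score (k, S).
Proof.
move=> sortedL kS_won; rewrite mem_filter => /andP [/andP [_ p_lost] p_acc].
exact: greedy_aux_blocked_score_le sortedL _ kS_won p_acc p_lost.
Qed.

Lemma qgreedy_le_bid {Q : bundle r} {L k S} :
  score_sorted L -> won_bundle (greedy Q L) k = Some S -> 0 <= b k S ->
  qgreedy omega b Q L k S <= b k S.
Proof.
move=> sortedL kS_won bkS_ge0; rewrite /qgreedy big_seq.
apply: (big_ind (fun x => x <= b k S)) => // [x y xb yb|p p_blocked].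
  by rewrite ge_max xb yb.
have sqrt_ge0 := sqrtr_ge0 (wdot omega S).
apply: le_trans (ler_wpM2r sqrt_ge0 (blocked_score_le sortedL kS_won p_blocked)) _.
(* if |S| = 0 the division by sqrt|S| yields 0 and so does the product *)
have [->|sqrt_neq0] := eqVneq (Num.sqrt (wdot omega S)) 0; first by rewrite mulr0.
by rewrite /score divfK.
Qed.

End RuleB.

Theorem theorem3p1 (F : realType) (r : nat) (N : finType)
    (Q : bundle r) (B : N -> seq (bundle r))
    (b v : N -> bundle r -> F) (beta : 'I_r -> F)
    (hB0 : forall i S, S \in B i -> S != bzero r)
    (hb0 : forall i S, S \in B i -> 0 <= b i S)
    (hbeta : forall t, 0 <= beta t)
    (hstand : forall i S, S \in B i -> qbase beta S <= v i S) :
  (* Rule A *)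
  (forall astar : alloc r N, optimal_alloc B Q b astar ->
   forall k : N, (forall S, S \in B k -> b k S = v k S) ->
   forall Wk : F, optval b (fun a => feasible B Q a /\ a k = None) Wk ->
   0 <= utility v k (astar k) (priceA beta b astar k Wk))
  /\
  (* Rule B *)
  (forall (omega : 'I_r -> F) (L : seq (N * bundle r)),
   (forall t, 0 < omega t) -> greedy_order omega b B L ->
   forall k : N, (forall S, S \in B k -> b k S = v k S) ->
   0 <= utility v k (won_bundle (greedy Q L) k) (priceB beta omega b Q L k)).
Proof.
split.
- move=> astar opt k truthful Wk Wk_opt; apply: utility_ge0 => S kS.
  have SB : S \in B k by case: opt => [[inB _] _]; exact: inB kS.
  rewrite /priceA ge_max hstand //= -(truthful _ SB).
  by apply: (vcg_price_le_bid B Q b k S _ opt Wk_opt) => a [].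
- move=> omega L _ [_ [memL sortedL]] k truthful; apply: utility_ge0 => S kS.
  have SB : S \in B k by rewrite -[S]/((k, S).2) -memL (mem_greedy_aux (won_bundle_mem kS)).
  rewrite /priceB ge_max hstand //= -(truthful _ SB).
  exact: qgreedy_le_bid sortedL kS (hb0 _ _ SB).
Qed.
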